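(* Let $P=\sum_{|\nu|\le d}a_\nu X^\nu\in\mathbb{C}[X_1,\dots,X_n]_{int}$ with $a_\nu\in{}^*\mathbb{C}$ and $d\in{}^*\mathbb{N}$ infinite. Then $P$ is absolutely bounded if and only if (i) $a_\nu\in{}^b\mathbb{C}$ for every $\nu\in\mathbb{N}^n$ (i.e. $|\nu|$ finite), and (ii) $|a_\nu|^{1/|\nu|}\in{}^i\mathbb{C}$ for every $\nu$ with $|\nu|$ infinite and $|\nu|\le d$.
   Context: ${}^*\mathbb{C}$ is an ultrapower of $\mathbb{C}$ by a nonprincipal ultrafilter; ${}^b\mathbb{C}$ (resp. ${}^i\mathbb{C}$) denotes the elements $z$ with $|z|\le r$ for some standard real $r$ (resp. $|z|<r$ for every standard real $r>0$); ${}^*\mathbb{N}$ is the corresponding extension of $\mathbb{N}$. For finite $n$, $\mathbb{C}[X_1,\dots,X_n]_{int}$ is the ultrapower of $\mathbb{C}[X_1,\dots,X_n]$ (internal polynomials); each is written uniquely as $\sum_{|\nu|\le d}a_\nu X^\nu$ over multi-indices $\nu\in{}^*\mathbb{N}^n$ and is viewed as an internal function ${}^*\mathbb{C}^n\to{}^*\mathbb{C}$. $|P|:=\sum_{|\nu|\le d}|a_\nu|X^\nu$. $P$ is absolutely bounded if $|P|({}^b\mathbb{C}^n)\subset{}^b\mathbb{C}$. *)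

From HB Require Import structures.
From mathcomp Require Import all_boot all_order all_algebra.
From mathcomp Require Import all_classical all_reals all_analysis.
From mathcomp Require Import complex.
Set Implicit Arguments. Unset Strict Implicit. Unset Printing Implicit Defensive.
Import Order.TTheory GRing.Theory Num.Theory.
Local Open Scope classical_set_scope.
Local Open Scope ring_scope.

Definition nonprincipal_ultrafilter (U : set (set nat)) : Prop :=
  U setT /\ ~ U set0 /\
  (forall A B : set nat, U A -> A `<=` B -> U B) /\
  (forall A B : set nat, U A -> U B -> U (A `&` B)) /\
  (forall A : set nat, U A \/ U (~` A)) /\
  (forall m : nat, ~ U [set m]).

Definition ae (U : set (set nat)) (P : nat -> Prop) : Prop := U [set k | P k].

Definition cmod (R : realType) (z : R[i]) : R :=
  match z with Complex a b => Num.sqrt (a ^+ 2 + b ^+ 2) end.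

(* an element of *C is represented by z : nat -> R[i]; of *N by nat -> nat *)

Definition hbounded (R : realType) (U : set (set nat)) (z : nat -> R[i]) : Prop :=
  exists r : R, ae U (fun k => cmod (z k) <= r).

Definition hinfinitesimal (R : realType) (U : set (set nat)) (z : nat -> R[i]) : Prop :=
  forall r : R, 0 < r -> ae U (fun k => cmod (z k) < r).

Definition hinfinite (U : set (set nat)) (m : nat -> nat) : Prop :=
  forall N : nat, ae U (fun k => (N < m k)%N).

Definition multi (n : nat) := {ffun 'I_n -> nat}.
Definition mdeg (n : nat) (nu : multi n) : nat := (\sum_(i < n) nu i)%N.

(* A standard polynomial in n variables is given by its coefficient function
   multi n -> R[i]; an internal polynomial P is a sequence of such (k-th
   component P k). *)

(* value at index k of |P|(z) = sum_{|nu| <= d} |a_nu| z^nu, the sum being over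
   the (finitely many) multi-indices of total degree <= d k *)
Definition absP_eval (R : realType) (n : nat) (P : nat -> multi n -> R[i])
    (d : nat -> nat) (z : 'I_n -> nat -> R[i]) (k : nat) : R[i] :=
  \sum_(nu : {ffun 'I_n -> 'I_(d k).+1} | (\sum_(i < n) nu i <= d k)%N)
     ((cmod (P k [ffun i => val (nu i)]))%:C%C *
      \prod_(i < n) z i k ^+ (val (nu i))).

Definition abs_bounded (R : realType) (U : set (set nat)) (n : nat)
    (P : nat -> multi n -> R[i]) (d : nat -> nat) : Prop :=
  forall z : 'I_n -> nat -> R[i],
    (forall i : 'I_n, hbounded U (z i)) ->
    hbounded U (absP_eval P d z).

From HB Require Import structures.
From mathcomp Require Import ring lra.
From mathcomp Require Import all_boot all_order all_algebra.
From mathcomp Require Import all_classical all_reals all_analysis.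
From mathcomp Require Import complex.
Import Order.TTheory GRing.Theory Num.Theory.
Local Open Scope classical_set_scope.
Local Open Scope ring_scope.

(* Evaluating |P| at a standard point (c, ..., c) bounds every |a_nu| c^|nu|:
   c = 1 gives (i), and c = 2/r shows that |a_nu| >= r^|nu| for an infinite
   |nu| would make |P|(c, ..., c) exceed 2^|nu|.  Conversely, by (ii) and
   overspill, for each standard c > 0 there is a standard N with
   |a_nu| <= c^|nu| whenever N <= |nu| <= d; with (i) for the finitely many
   |nu| < N this gives |a_nu| <= K c^|nu|, and for |z_i| <= r the choice
   c = 1/(2r) bounds |P|(z) by K times a product of n geometric series. *)

Section ComplexModulus.
Context {R : realType}.
Implicit Types x y : R[i].

Lemma cmodE x : cmod x = Normc.normc x.
Proof. by case: x. Qed.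

Lemma cmod_ge0 x : 0 <= cmod x.
Proof. by case: x => a b /=; apply: sqrtr_ge0. Qed.

Lemma cmodM x y : cmod (x * y) = cmod x * cmod y.
Proof. by rewrite !cmodE Normc.normcM. Qed.

Lemma cmod1 : cmod (1 : R[i]) = 1.
Proof. by rewrite cmodE Normc.normc1. Qed.

Lemma cmodX x m : cmod (x ^+ m) = cmod x ^+ m.
Proof. by elim: m => [|m IH]; rewrite ?expr0 ?cmod1 // !exprS cmodM IH. Qed.

Lemma cmod_real (a : R) : 0 <= a -> cmod a%:C%C = a.
Proof. by move=> a_ge0 /=; rewrite expr0n /= addr0 sqrtr_sqr ger0_norm. Qed.

Lemma cmod_sum_le (I : finType) (A : pred I) (F : I -> R[i]) :
  cmod (\sum_(i | A i) F i) <= \sum_(i | A i) cmod (F i).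
Proof.
elim/big_rec2: _ => [|i y1 y2 _ IH]; first by rewrite cmodE Normc.normc0.
by apply: le_trans (_ : _ <= cmod (F i) + cmod y2) _;
  rewrite ?lerD2l // !cmodE; exact: le_normcD.
Qed.

Lemma cmod_prod (I : finType) (F : I -> R[i]) :
  cmod (\prod_i F i) = \prod_i cmod (F i).
Proof.
by elim/big_rec2: _ => [|i y1 y2 _ IH]; rewrite ?cmod1 // cmodM IH.
Qed.

End ComplexModulus.

Section UltrafilterReasoning.
Variable U : set (set nat).
Hypothesis hU : nonprincipal_ultrafilter U.

Lemma aeT : ae U (fun _ => True).
Proof. by case: hU => UT _; rewrite /ae; have -> : [set _ | True] = setT. Qed.

Lemma ae_mono {A B : nat -> Prop} :
  ae U A -> (forall k, A k -> B k) -> ae U B.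
Proof. by case: hU => _ [_ [Uup _]] UA AB; apply: Uup UA _ => k; exact: AB. Qed.

Lemma ae_and {A B : nat -> Prop} : ae U A -> ae U B -> ae U (fun k => A k /\ B k).
Proof. by case: hU => _ [_ [_ [UI _]]]; exact: UI. Qed.

Lemma ae_forall {A : nat -> Prop} : (forall k, A k) -> ae U A.
Proof. by move=> A_all; apply: ae_mono aeT _ => k _; exact: A_all. Qed.

Lemma ae_exists {A : nat -> Prop} : ae U A -> exists k, A k.
Proof.
case: hU => _ [U0 _] UA; apply: contrapT => noA; apply: U0.
suff <- : [set k | A k] = set0 by [].
by apply/seteqP; split => k //= Ak; apply: noA; exists k.
Qed.

Lemma ae_or_not (A : nat -> Prop) : ae U A \/ ae U (fun k => ~ A k).
Proof. by case: hU => _ [_ [_ [_ [UC _]]]]; exact: UC. Qed.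

Lemma ae_bounded_seq (R : realType) (T : eqType) (s : seq T) (f : T -> nat -> R) :
  (forall t, exists r, ae U (fun k => f t k <= r)) ->
  exists r, ae U (fun k => forall t, t \in s -> f t k <= r).
Proof.
move=> f_bd; elim: s => [|t s [r IH]]; first by exists 0; exact: ae_forall.
have [r' fr'] := f_bd t; exists (Num.max r r').
apply: (ae_mono (ae_and fr' IH)) => k [ft fs] t'.
by rewrite inE => /orP[/eqP->|/fs]; rewrite le_max ?ft ?orbT // => ->.
Qed.

End UltrafilterReasoning.
Arguments aeT {U} hU.
Arguments ae_mono {U} hU {A B}.
Arguments ae_and {U} hU {A B}.
Arguments ae_forall {U} hU {A}.
Arguments ae_exists {U} hU {A}.
Arguments ae_or_not {U} hU A.
Arguments ae_bounded_seq {U} hU {R T} s f.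

Lemma powR_invnK {R : realType} {x : R} {m : nat} : 0 <= x -> m != 0%N ->
  powR x m%:R^-1 ^+ m = x.
Proof.
move=> x_ge0 m_neq0; rewrite -powR_mulrn ?powR_ge0 // -powRrM mulVf ?pnatr_eq0 //.
exact: powRr1.
Qed.

Lemma geometric_half_sum_le2 (R : realType) (M : nat) :
  \sum_(j < M) (2^-1 : R) ^+ j <= 2.
Proof.
have : \sum_(j < M) (2^-1 : R) ^+ j = 2 - 2 * 2^-1 ^+ M.
  elim: M => [|M IH]; first by rewrite big_ord0 expr0 mulr1 subrr.
  by rewrite big_ord_recr /= IH exprS; field.
move=> ->; have : 0 <= (2^-1 : R) ^+ M by rewrite exprn_ge0 // invr_ge0.
lra.
Qed.

Section MultiIndices.
Context {n : nat}.
Implicit Types nu : multi n.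

Definition multi_of_bounded {M} (t : {ffun 'I_n -> 'I_M}) : multi n :=
  [ffun i => val (t i)].

Definition bounded_of_multi M nu : {ffun 'I_n -> 'I_M.+1} :=
  [ffun i => inord (nu i)].

Lemma mdeg_multi_of_bounded M (t : {ffun 'I_n -> 'I_M}) :
  mdeg (multi_of_bounded t) = (\sum_(i < n) t i)%N.
Proof. by apply: eq_bigr => i _; rewrite ffunE. Qed.

Lemma leq_mdeg nu i : (nu i <= mdeg nu)%N.
Proof. by rewrite /mdeg (bigD1 i) //= leq_addr. Qed.

Lemma bounded_of_multiK {M nu} :
  (mdeg nu <= M)%N -> multi_of_bounded (bounded_of_multi M nu) = nu.
Proof.
move=> deg_le; apply/ffunP => i.
by rewrite !ffunE /= inordK // ltnS (leq_trans (leq_mdeg nu i)).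
Qed.

Lemma mdeg_bounded_of_multi M nu :
  (mdeg nu <= M)%N -> (\sum_(i < n) bounded_of_multi M nu i)%N = mdeg nu.
Proof. by move=> deg_le; rewrite -mdeg_multi_of_bounded bounded_of_multiK. Qed.

End MultiIndices.

Lemma absP_eval_const_ge (R : realType) (n : nat) (P : nat -> multi n -> R[i])
    (d : nat -> nat) (c : R) (k : nat) (nu : multi n) :
  0 <= c -> (mdeg nu <= d k)%N ->
  cmod (P k nu) * c ^+ mdeg nu <= cmod (absP_eval P d (fun _ _ => c%:C%C) k).
Proof.
move=> c_ge0 deg_le.
pose F (t : {ffun 'I_n -> 'I_(d k).+1}) :=
  cmod (P k (multi_of_bounded t)) * c ^+ (\sum_(i < n) t i).
have F_ge0 t : 0 <= F t by rewrite mulr_ge0 ?cmod_ge0 ?exprn_ge0.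
have -> : absP_eval P d (fun _ _ => c%:C%C) k =
    (\sum_(t : {ffun 'I_n -> 'I_(d k).+1} | (\sum_(i < n) t i <= d k)%N) F t)%:C%C.
  rewrite /absP_eval rmorph_sum; apply: eq_bigr => t _.
  by rewrite rmorphM /= prodrXr rmorphXn.
rewrite cmod_real ?sumr_ge0 // (bigD1 (bounded_of_multi (d k) nu)) /=; last first.
  by rewrite mdeg_bounded_of_multi.
rewrite /F bounded_of_multiK // mdeg_bounded_of_multi // lerDl.
by apply: sumr_ge0 => t _; exact: F_ge0.
Qed.

Lemma abs_bounded_coef_bounded {R : realType} {U : set (set nat)}
    (hU : nonprincipal_ultrafilter U) {n : nat} {P : nat -> multi n -> R[i]}
    {d : nat -> nat} :
  hinfinite U d -> abs_bounded U P d -> forall nu : multi n, hbounded U (fun k => P k nu).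
Proof.
move=> d_inf P_bd nu.
have [M PM] : hbounded U (absP_eval P d (fun _ _ => 1%:C%C)).
  by apply: P_bd => i; exists 1; apply: ae_forall => // k; rewrite cmod_real.
exists M; apply: (ae_mono hU (ae_and hU PM (d_inf (mdeg nu)))) => k [PMk /ltnW deg_le].
apply: le_trans PMk.
by have := @absP_eval_const_ge _ _ P d 1 k nu ler01 deg_le; rewrite expr1n mulr1.
Qed.

Lemma abs_bounded_coef_root_small {R : realType} {U : set (set nat)}
    (hU : nonprincipal_ultrafilter U) {n : nat} {P : nat -> multi n -> R[i]}
    {d : nat -> nat} :
  abs_bounded U P d ->
  forall nu : nat -> multi n,
    hinfinite U (fun k => mdeg (nu k)) ->
    ae U (fun k => (mdeg (nu k) <= d k)%N) ->
    forall r : R, 0 < r ->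
      ae U (fun k => powR (cmod (P k (nu k))) (mdeg (nu k))%:R^-1 < r).
Proof.
move=> P_bd nu nu_inf nu_le r r_gt0.
have [//|root_ge] :=
  ae_or_not hU (fun k => powR (cmod (P k (nu k))) (mdeg (nu k))%:R^-1 < r).
have c_ge0 : 0 <= 2 / r by rewrite divr_ge0 // ltW.
have [M PM] : hbounded U (absP_eval P d (fun _ _ => (2 / r)%:C%C)).
  by apply: P_bd => i; exists (2 / r); apply: ae_forall => // k; rewrite cmod_real.
pose N := Num.Def.archi_bound `|M|.
have M_lt_N : M < N%:R by apply: le_lt_trans (ler_norm M) (archi_boundP _).
have [k [PMk [N_lt [deg_le root_not_lt]]]] :=
  ae_exists hU (ae_and hU PM (ae_and hU (nu_inf N) (ae_and hU nu_le root_ge))).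
set m := mdeg (nu k) in N_lt deg_le root_not_lt *; set x := cmod (P k (nu k)).
have r_le_root : r <= powR x m%:R^-1 by rewrite leNgt; apply/negP.
have x_ge0 : 0 <= x by exact: cmod_ge0.
have m_neq0 : m != 0%N by rewrite -lt0n (leq_ltn_trans _ N_lt).
have rm_le_x : r ^+ m <= x.
  rewrite -(powR_invnK x_ge0 m_neq0) lerXn2r ?nnegrE ?powR_ge0 ?(ltW r_gt0) //.
have : 2 ^+ m <= x * (2 / r) ^+ m.
  have -> : (2 : R) ^+ m = r ^+ m * (2 / r) ^+ m.
    by rewrite -exprMn; congr (_ ^+ _); field; exact: lt0r_neq0.
  by rewrite ler_wpM2r // exprn_ge0.
have := le_trans (@absP_eval_const_ge _ _ P d _ k _ c_ge0 deg_le) PMk.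
rewrite -/x -/m.
have : (N%:R : R) < 2 ^+ m.
  by rewrite -natrX ltr_nat (ltn_trans N_lt) // ltn_expl.
lra.
Qed.

Lemma exists_max_mdeg {n : nat} {A : multi n -> Prop} {b : nat} :
  (exists nu, A nu) -> (forall nu, A nu -> (mdeg nu <= b)%N) ->
  exists2 nu, A nu & forall mu, A mu -> (mdeg mu <= mdeg nu)%N.
Proof.
move=> [nu0 A_nu0] A_le.
pose D j := `[< exists nu, A nu /\ mdeg nu = j >].
have D_ex : exists j, D j by exists (mdeg nu0); apply/asboolP; exists nu0.
have D_le j : D j -> (j <= b)%N by move=> /asboolP[nu [A_nu <-]]; exact: A_le.
case: (ex_maxnP D_ex D_le) => j /asboolP[nu [A_nu <-]] j_max.
by exists nu => // mu A_mu; apply: j_max; apply/asboolP; exists mu.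
Qed.

(* Overspill: were the bound to fail for every standard N, the bad indices of
   maximal degree would form an internal multi-index of infinite degree
   violating (ii). *)
Lemma coef_root_small_geometric {R : realType} {U : set (set nat)}
    (hU : nonprincipal_ultrafilter U) {n : nat} {P : nat -> multi n -> R[i]}
    {d : nat -> nat} {c : R} :
  0 < c ->
  (forall nu : nat -> multi n,
    hinfinite U (fun k => mdeg (nu k)) ->
    ae U (fun k => (mdeg (nu k) <= d k)%N) ->
    forall r : R, 0 < r ->
      ae U (fun k => powR (cmod (P k (nu k))) (mdeg (nu k))%:R^-1 < r)) ->
  exists N, ae U (fun k => forall nu : multi n, (N <= mdeg nu)%N ->
    (mdeg nu <= d k)%N -> cmod (P k nu) <= c ^+ mdeg nu).
Proof.
move=> c_gt0 root_small; apply: contrapT => no_N.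
pose bad k nu := (mdeg nu <= d k)%N /\ c ^+ mdeg nu < cmod (P k nu).
have bad_high N : ae U (fun k => exists2 nu, bad k nu & (N <= mdeg nu)%N).
  have [//|none] := ae_or_not hU (fun k => exists2 nu, bad k nu & (N <= mdeg nu)%N).
  case: no_N; exists N; apply: (ae_mono hU none) => k none_k nu N_le deg_le.
  by rewrite leNgt; apply/negP => lt; apply: none_k; exists nu.
have /choice[f f_max] : forall k, exists nu, (exists mu, bad k mu) ->
    bad k nu /\ forall mu, bad k mu -> (mdeg mu <= mdeg nu)%N.
  move=> k; have [some|none] := pselect (exists mu, bad k mu); last first.
    by exists [ffun=> 0%N] => /none.
  have [nu bad_nu nu_max] := exists_max_mdeg some (fun mu (bad_mu : bad k mu) => bad_mu.1).
  by exists nu.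
have f_inf : hinfinite U (fun k => mdeg (f k)).
  move=> N; apply: (ae_mono hU (bad_high N.+1)) => k [nu bad_nu N_lt].
  have [_ nu_le] := f_max k (ex_intro _ nu bad_nu).
  exact: leq_trans N_lt (nu_le nu bad_nu).
have f_bad : ae U (fun k => bad k (f k)).
  apply: (ae_mono hU (bad_high 0%N)) => k [nu bad_nu _].
  by have [] := f_max k (ex_intro _ nu bad_nu).
have f_le : ae U (fun k => (mdeg (f k) <= d k)%N).
  by apply: (ae_mono hU f_bad) => k [].
have [k [root_lt [[_ c_lt] deg_gt0]]] :=
  ae_exists hU (ae_and hU (root_small f f_inf f_le c c_gt0) (ae_and hU f_bad (f_inf 0%N))).
move: root_lt c_lt; set m := mdeg (f k); set x := cmod (P k (f k)) => root_lt.
have m_neq0 : m != 0%N by rewrite -lt0n.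
have x_ge0 : 0 <= x := cmod_ge0 _.
have : x < c ^+ m.
  by rewrite -(powR_invnK x_ge0 m_neq0) ltrXn2r ?nnegrE ?powR_ge0 ?ltW.
by move=> /lt_trans/[apply]; rewrite ltxx.
Qed.

Lemma ae_coef_bounded_low_degree {R : realType} {U : set (set nat)}
    (hU : nonprincipal_ultrafilter U) {n : nat} {P : nat -> multi n -> R[i]}
    (N : nat) :
  (forall nu : multi n, hbounded U (fun k => P k nu)) ->
  exists B, ae U (fun k => forall nu : multi n, (mdeg nu <= N)%N -> cmod (P k nu) <= B).
Proof.
move=> coef_bd.
have [B PB] := ae_bounded_seq hU (enum {ffun 'I_n -> 'I_N.+1})
  (fun t k => cmod (P k (multi_of_bounded t))) (fun t => coef_bd _).
exists B; apply: (ae_mono hU PB) => k PBk nu deg_le.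
by rewrite -(bounded_of_multiK deg_le); apply: PBk; rewrite mem_enum.
Qed.

Lemma le_geometric_of_tail (R : realFieldType) (x B c : R) (m N : nat) :
  0 < c <= 1 -> ((N <= m)%N -> x <= c ^+ m) -> ((m < N)%N -> x <= B) ->
  x <= (1 + `|B| / c ^+ N) * c ^+ m.
Proof.
move=> /andP[c_gt0 c_le1] tail low.
have cm_gt0 : 0 < c ^+ m by rewrite exprn_gt0.
have cN_gt0 : 0 < c ^+ N by rewrite exprn_gt0.
rewrite mulrDl mul1r; case: (leqP N m) => [N_le|m_lt].
  apply: (le_trans (tail N_le)); rewrite lerDl.
  by rewrite mulr_ge0 ?divr_ge0 // ltW.
apply: le_trans (low m_lt) _; apply: le_trans (ler_norm B) _.
have : `|B| <= `|B| / c ^+ N * c ^+ m.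
  rewrite -mulrA ler_peMr // mulrC ler_pdivlMr // mul1r.
  by rewrite ler_wiXn2l // ?ltW // ltnW.
lra.
Qed.

(* With [c * r = 1/2], each term of [|P|(z)] is at most [K * 2^-|t|], and these
   sum to at most [K] times a product of [n] geometric series. *)
Lemma absP_eval_le_geometric (R : realType) (n : nat) (P : nat -> multi n -> R[i])
    (d : nat -> nat) (z : 'I_n -> nat -> R[i]) (k : nat) (K c r : R) :
  0 <= K -> 0 <= r -> c * r = 2^-1 ->
  (forall nu : multi n, (mdeg nu <= d k)%N -> cmod (P k nu) <= K * c ^+ mdeg nu) ->
  (forall i, cmod (z i k) <= r) ->
  cmod (absP_eval P d z k) <= K * 2 ^+ n.
Proof.
move=> K_ge0 r_ge0 cr coef_le z_le.
pose G (t : {ffun 'I_n -> 'I_(d k).+1}) := K * \prod_(i < n) (2^-1 : R) ^+ t i.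
have G_ge0 t : 0 <= G t by rewrite mulr_ge0 // prodr_ge0 // => i _; rewrite exprn_ge0.
rewrite /absP_eval; apply: (le_trans (cmod_sum_le _ _ _)).
apply: (@le_trans _ _
  (\sum_(t : {ffun 'I_n -> 'I_(d k).+1} | (\sum_(i < n) t i <= d k)%N) G t)).
  apply: ler_sum => t deg_le.
  rewrite cmodM cmod_prod cmod_real ?cmod_ge0 //.
  have -> : G t = K * c ^+ mdeg (multi_of_bounded t) * \prod_(i < n) r ^+ t i.
    rewrite mdeg_multi_of_bounded -prodrXr -mulrA -big_split /=.
    by congr (_ * _); apply: eq_bigr => i _; rewrite -exprMn cr.
  apply: ler_pM; rewrite ?cmod_ge0 ?prodr_ge0 //.
  - by move=> i _; rewrite cmodX exprn_ge0 ?cmod_ge0.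
  - by apply: coef_le; rewrite mdeg_multi_of_bounded.
  - by apply: ler_prod => i _; rewrite cmodX exprn_ge0 ?cmod_ge0 ?lerXn2r ?nnegrE ?cmod_ge0.
apply: (le_trans (_ : _ <= \sum_t G t)).
  rewrite [X in _ <= X](bigID
    (fun t : {ffun 'I_n -> 'I_(d k).+1} => (\sum_(i < n) t i <= d k)%N)) /= lerDl.
  by apply: sumr_ge0 => t _.
rewrite -mulr_sumr ler_wpM2l //.
rewrite -(bigA_distr_bigA (fun (i : 'I_n) (j : 'I_(d k).+1) => (2^-1 : R) ^+ j)) /=.
have -> : (2 : R) ^+ n = \prod_(i < n) 2 by rewrite prodr_const card_ord.
by apply: ler_prod => i _; rewrite sumr_ge0 ?geometric_half_sum_le2.
Qed.

Lemma abs_bounded_of_coef {R : realType} {U : set (set nat)}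
    (hU : nonprincipal_ultrafilter U) {n : nat} {P : nat -> multi n -> R[i]}
    {d : nat -> nat} :
  (forall nu : multi n, hbounded U (fun k => P k nu)) ->
  (forall nu : nat -> multi n,
    hinfinite U (fun k => mdeg (nu k)) ->
    ae U (fun k => (mdeg (nu k) <= d k)%N) ->
    forall r : R, 0 < r ->
      ae U (fun k => powR (cmod (P k (nu k))) (mdeg (nu k))%:R^-1 < r)) ->
  abs_bounded U P d.
Proof.
move=> coef_bd root_small z z_bd.
have [r0 z_le] := ae_bounded_seq hU (enum 'I_n) (fun i k => cmod (z i k)) z_bd.
pose r := Num.max r0 1.
have r_ge1 : 1 <= r by rewrite le_max lexx orbT.
have r_gt0 : 0 < r := lt_le_trans ltr01 r_ge1.
pose c := (2 * r)^-1.
have c_gt0 : 0 < c by rewrite invr_gt0 mulr_gt0.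
have c_le1 : c <= 1 by rewrite invf_le1 ?mulr_gt0 //; lra.
have cr : c * r = 2^-1 by rewrite /c; field; exact: lt0r_neq0.
have [N tail] := coef_root_small_geometric hU c_gt0 root_small.
have [B low] := ae_coef_bounded_low_degree hU N coef_bd.
exists ((1 + `|B| / c ^+ N) * 2 ^+ n).
apply: (ae_mono hU (ae_and hU z_le (ae_and hU tail low))) => k [zk [tk lk]].
apply: absP_eval_le_geometric (ltW r_gt0) cr _ _.
- by rewrite addr_ge0 // divr_ge0 // exprn_ge0 // ltW.
- move=> nu deg_le; apply: le_geometric_of_tail; first by rewrite c_gt0 c_le1.
    by move=> N_le; exact: tk.
  by move=> /ltnW deg_le'; exact: lk.
- by move=> i; apply: le_trans (zk i (mem_enum _ _)) _; rewrite le_max lexx.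
Qed.

Theorem proposition1p4p2 (R : realType) (U : set (set nat))
    (hU : nonprincipal_ultrafilter U) (n : nat)
    (P : nat -> multi n -> R[i]) (d : nat -> nat)
    (hP : ae U (fun k => forall nu : multi n, (d k < mdeg nu)%N -> P k nu = 0))
    (hd : hinfinite U d) :
  abs_bounded U P d <->
  ((forall nu : multi n, hbounded U (fun k => P k nu)) /\
   (forall nu : nat -> multi n,
      hinfinite U (fun k => mdeg (nu k)) ->
      ae U (fun k => (mdeg (nu k) <= d k)%N) ->
      forall r : R, 0 < r ->
        ae U (fun k => powR (cmod (P k (nu k))) ((mdeg (nu k))%:R^-1) < r))).
Proof.
split=> [P_bd | [coef_bd root_small]].
  split; first exact: (abs_bounded_coef_bounded hU hd P_bd).
  exact: (abs_bounded_coef_root_small hU P_bd).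
exact: (abs_bounded_of_coef hU coef_bd root_small).
Qed.
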